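(* Let $n\in\{2,6,10,\dots\}$ and consider $f_{n+4}$ on $\{0,1\}^{n+4}$. (a) At any vertex with $x_{n+1}=x_{n+2}=1$, changing $x_{n+1}$ or $x_{n+2}$ to $0$ strictly decreases $f_{n+4}$; hence an increasing path that enters the subcube $\{x_{n+1}=x_{n+2}=1\}$ never leaves it. (b) At any vertex with $x_{n+3}=x_{n+4}=1$, changing $x_{n+3}$ or $x_{n+4}$ to $0$ strictly decreases $f_{n+4}$; hence an increasing path that enters the subcube $\{x_{n+3}=x_{n+4}=1\}$ never leaves it.
   Context: For $n\in\{2,6,10,\dots\}$ define polynomials $f_n$ in variables $x_1,\dots,x_n$ (evaluated on $\{0,1\}^n$) recursively. Set $f_2(x_1,x_2):=x_1+x_2$. For $n\in\{2,6,10,\dots\}$, write $\mathbf{x}=(x_1,\dots,x_n)$, $S:=\sum_{i=1}^n x_i$, let $M_n:=\max_{\{0,1\}^n} f_n-\min_{\{0,1\}^n} f_n+1$, and define $f_{n+4}(\mathbf{x},x_{n+1},x_{n+2},x_{n+3},x_{n+4}) := f_n(\mathbf{x}) - M_n n^2 x_{n+1} + M_n(n+1) S x_{n+1} - x_{n+2} - 2M_n n S x_{n+2} + 2M_n n(n+2) x_{n+1}x_{n+2} - 4 S x_{n+3} + 2x_{n+1}x_{n+3} + 2x_{n+2}x_{n+3} - 3x_{n+3} + (M_n(n-1)+4) S x_{n+4} + 6M_n n^2 x_{n+3}x_{n+4} - 5M_n n^2 x_{n+4}$. An increasing path is a sequence of vertices of the hypercube, consecutive ones differing in exactly one coordinate,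 along which the function value strictly increases. *)

From mathcomp Require Import all_boot all_order all_algebra.
Set Implicit Arguments. Unset Strict Implicit. Unset Printing Implicit Defensive.
Import Order.TTheory GRing.Theory Num.Theory.
Local Open Scope ring_scope.

(* Vertices of the hypercube {0,1}^N, coordinates 0-indexed:
   the paper's x_i is coordinate (i-1). *)
Definition vertex (N : nat) := {ffun 'I_N -> bool}.

(* Read coordinate i (as a nat) of a vertex; false outside the range. *)
Definition vcoord (N : nat) (v : vertex N) (i : nat) : bool :=
  if insub i is Some j then v j else false.

Definition b2z (b : bool) : int := (nat_of_bool b)%:Z.

(* f_{4k+2} as a function of an assignment x : nat -> bool (only the first
   4k+2 coordinates are read). *)
Fixpoint fpoly (k : nat) : (nat -> bool) -> int :=
  match k with
  | 0 => fun x => b2z (x 0%N) + b2z (x 1%N)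
  | k'.+1 =>
    let g := fpoly k' in
    let n := (4 * k' + 2)%N in
    let g0 := g (fun _ => false) in
    let mx := \big[Num.max/g0]_(v : vertex n) g (vcoord v) in
    let mn := \big[Num.min/g0]_(v : vertex n) g (vcoord v) in
    let M := mx - mn + 1 in
    fun x =>
      let nz : int := n%:Z in
      let S : int := \sum_(i < n) b2z (x i) in
      let a := b2z (x n) in
      let b := b2z (x n.+1) in
      let c := b2z (x n.+2) in
      let d := b2z (x n.+3) in
      g x - M * nz ^+ 2 * a + M * (nz + 1) * S * a - b
        - 2 * M * nz * S * b + 2 * M * nz * (nz + 2) * a * b
        - 4 * S * c + 2 * a * c + 2 * b * c - 3 * c
        + (M * (nz - 1) + 4) * S * d + 6 * M * nz ^+ 2 * c * d
        - 5 * M * nz ^+ 2 * d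
  end.

Definition f (k : nat) (v : vertex (4 * k + 2)) : int := fpoly k (vcoord v).

Definition vflip (N : nat) (v : vertex N) (i : nat) : vertex N :=
  [ffun j : 'I_N => if nat_of_ord j == i then ~~ v j else v j].

Definition adjacent (N : nat) (v w : vertex N) : bool :=
  [exists j : 'I_N, w == vflip v j].

Definition incr_step (N : nat) (F : vertex N -> int) : rel (vertex N) :=
  fun v w => adjacent v w && (F v < F w).

Definition increasing_path (N : nat) (F : vertex N -> int) (p : seq (vertex N)) : bool :=
  sorted (incr_step F) p.

Definition vzero (N : nat) : vertex N := [ffun => false].

From mathcomp Require Import all_boot all_order all_algebra.
From mathcomp Require Import zify ring lra.
Set Implicit Arguments. Unset Strict Implicit. Unset Printing Implicit Defensive.
Import Order.TTheory GRing.Theory Num.Theory.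
Local Open Scope ring_scope.

(* With M_n = fM k and S = weight n x, f_{n+4} = f_n + fstep M_n n S x_{n+1} .. x_{n+4},
   and flipping one of the four new coordinates leaves f_n and S unchanged.  So each
   local claim compares fstep at two corners of a square; the differences are
   explicit polynomials that are positive because M_n >= 1, 0 <= S <= n and n >= 2.
   An increasing path never takes a decreasing step, so it cannot leave the subcube. *)

Definition fM (k : nat) : int :=
  let n := (4 * k + 2)%N in
  let g0 := fpoly k (fun _ => false) in
  \big[Num.max/g0]_(v : vertex n) fpoly k (vcoord v)
  - \big[Num.min/g0]_(v : vertex n) fpoly k (vcoord v) + 1.

Definition weight (n : nat) (x : nat -> bool) : int := \sum_(i < n) b2z (x i).

Definition fstep (M : int) (n : nat) (S : int) (a b c d : bool) : int :=
  let nz : int := n%:Z in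
  - M * nz ^+ 2 * b2z a + M * (nz + 1) * S * b2z a - b2z b
  - 2 * M * nz * S * b2z b + 2 * M * nz * (nz + 2) * b2z a * b2z b
  - 4 * S * b2z c + 2 * b2z a * b2z c + 2 * b2z b * b2z c - 3 * b2z c
  + (M * (nz - 1) + 4) * S * b2z d + 6 * M * nz ^+ 2 * b2z c * b2z d
  - 5 * M * nz ^+ 2 * b2z d.

Lemma fM_ge1 k : 1 <= fM k.
Proof.
rewrite /fM; set g0 := fpoly k _.
have max_ge : g0 <= \big[Num.max/g0]_(v : vertex (4 * k + 2)) fpoly k (vcoord v).
  by elim/big_rec: _ => // v y _ le_g0y; rewrite le_max le_g0y orbT.
have min_le : \big[Num.min/g0]_(v : vertex (4 * k + 2)) fpoly k (vcoord v) <= g0.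
  by elim/big_rec: _ => // v y _ le_yg0; rewrite ge_min le_yg0 orbT.
lra.
Qed.

Lemma weight_ge0 n x : 0 <= weight n x.
Proof. by apply: sumr_ge0 => i _; case: (x i). Qed.

Lemma weight_le n x : weight n x <= n%:Z.
Proof.
have : weight n x <= \sum_(i < n) 1 by apply: ler_sum => i _; case: (x i).
by rewrite sumr_const card_ord -natz.
Qed.

Lemma weight_eq n x y : (forall i, (i < n)%N -> x i = y i) -> weight n x = weight n y.
Proof. by move=> eq_xy; apply: eq_bigr => i _; rewrite eq_xy. Qed.

Lemma fpolyS k x : let n := (4 * k + 2)%N in
  fpoly k.+1 x = fpoly k x + fstep (fM k) n (weight n x) (x n) (x n.+1) (x n.+2) (x n.+3).
Proof. by rewrite /= /fstep /weight /fM; ring. Qed.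

Lemma fpoly_eq k x y : (forall i, (i < 4 * k + 2)%N -> x i = y i) ->
  fpoly k x = fpoly k y.
Proof.
elim: k x y => [|k IH] x y eq_xy; first by rewrite /= !eq_xy.
have eq_low i : (i < 4 * k + 2)%N -> x i = y i by move=> ?; apply: eq_xy; lia.
rewrite !fpolyS (IH x y eq_low) (weight_eq eq_low).
by rewrite !eq_xy //; lia.
Qed.

Lemma vcoord_vflip_eq N (v : vertex N) m : (m < N)%N ->
  vcoord (vflip v m) m = ~~ vcoord v m.
Proof. by move=> lt_mN; rewrite /vcoord insubT ffunE eqxx. Qed.

Lemma vcoord_vflip_neq N (v : vertex N) m i : i != m ->
  vcoord (vflip v m) i = vcoord v i.
Proof.
by move=> /negbTE ne_im; rewrite /vcoord; case: insubP => // j _ val_j; rewrite ffunE val_j ne_im.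
Qed.

Lemma fpolyS_vflip k (v : vertex (4 * k.+1 + 2)) m :
  let n := (4 * k + 2)%N in let y := vcoord (vflip v m) in
  (n <= m < 4 * k.+1 + 2)%N ->
  fpoly k.+1 y = fpoly k (vcoord v)
                 + fstep (fM k) n (weight n (vcoord v)) (y n) (y n.+1) (y n.+2) (y n.+3).
Proof.
move=> n y /andP[le_nm lt_m]; have y_low i : (i < n)%N -> y i = vcoord v i.
  by move=> lt_in; rewrite /y vcoord_vflip_neq //; apply/eqP; lia.
by rewrite fpolyS (fpoly_eq y_low) (weight_eq y_low).
Qed.

Section StepInequalities.

Variables (M : int) (n : nat) (S : int).
Hypotheses (M_ge1 : 1 <= M) (n_ge2 : (2 <= n)%N) (S_ge0 : 0 <= S) (S_le : S <= n%:Z).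
Let nz : int := n%:Z.

Lemma fstep_flip_a c d : fstep M n S true true c d - fstep M n S false true c d
  = M * nz ^+ 2 + 4 * M * nz + M * (nz + 1) * S + 2 * b2z c.
Proof. by rewrite /fstep /b2z /=; ring. Qed.

Lemma fstep_flip_b c d : fstep M n S true true c d - fstep M n S true false c d
  = 2 * M * nz * (nz + 2 - S) + 2 * b2z c - 1.
Proof. by rewrite /fstep /b2z /=; ring. Qed.

Lemma fstep_flip_c a b : fstep M n S a b true true - fstep M n S a b false true
  = 6 * M * nz ^+ 2 - 4 * S + 2 * b2z a + 2 * b2z b - 3.
Proof. by rewrite /fstep /b2z /=; ring. Qed.

Lemma fstep_flip_d a b : fstep M n S a b true true - fstep M n S a b true false
  = M * nz ^+ 2 + (M * (nz - 1) + 4) * S.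
Proof. by rewrite /fstep /b2z /=; ring. Qed.

Let nz_ge2 : 2 <= nz. Proof. by rewrite /nz; lia. Qed.
Let Mnz2_gt0 : 0 < M * nz ^+ 2. Proof. by rewrite mulr_gt0 ?exprn_gt0 //; lia. Qed.
Let b2z_ge0 (x : bool) : 0 <= b2z x. Proof. by case: x. Qed.

Lemma fstep_lt_ab c d :
  fstep M n S false true c d < fstep M n S true true c d
  /\ fstep M n S true false c d < fstep M n S true true c d.
Proof.
have := b2z_ge0 c; split; rewrite -subr_gt0 ?fstep_flip_a ?fstep_flip_b.
- have : 0 <= M * nz by rewrite mulr_ge0 //; lia.
  have : 0 <= M * (nz + 1) * S by rewrite !mulr_ge0 //; lia.
  have := Mnz2_gt0; lia.
- have : 0 < M * nz * (nz + 2 - S) by rewrite !mulr_gt0 //; lia.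
  lia.
Qed.

Lemma fstep_lt_cd a b :
  fstep M n S a b false true < fstep M n S a b true true
  /\ fstep M n S a b true false < fstep M n S a b true true.
Proof.
split; rewrite -subr_gt0 ?fstep_flip_c ?fstep_flip_d.
- have : nz ^+ 2 <= M * nz ^+ 2 by rewrite ler_peMl // exprn_ge0 //; lia.
  have : 2 * nz <= nz ^+ 2 by rewrite expr2 ler_wpM2r //; lia.
  have := b2z_ge0 a; have := b2z_ge0 b; lia.
- have : 0 <= (M * (nz - 1) + 4) * S by rewrite mulr_ge0 // addr_ge0 // mulr_ge0 //; lia.
  have := Mnz2_gt0; lia.
Qed.

End StepInequalities.

Lemma f_lt_vflip_ab k (v : vertex (4 * k.+1 + 2)) : let n := (4 * k + 2)%N in
  vcoord v n -> vcoord v n.+1 ->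
  f (vflip v n) < f v /\ f (vflip v n.+1) < f v.
Proof.
move=> n xa xb; have n_ge2 : (2 <= n)%N by lia.
have [lt_a lt_b] := fstep_lt_ab (fM_ge1 k) n_ge2 (weight_ge0 n (vcoord v))
  (weight_le n (vcoord v)) (vcoord v n.+2) (vcoord v n.+3).
rewrite /f !fpolyS_vflip ?fpolyS -/n; try lia.
rewrite !ltrD2l !vcoord_vflip_eq ?vcoord_vflip_neq ?xa ?xb; try lia.
exact: conj lt_a lt_b.
Qed.

Lemma f_lt_vflip_cd k (v : vertex (4 * k.+1 + 2)) : let n := (4 * k + 2)%N in
  vcoord v n.+2 -> vcoord v n.+3 ->
  f (vflip v n.+2) < f v /\ f (vflip v n.+3) < f v.
Proof.
move=> n xc xd; have n_ge2 : (2 <= n)%N by lia.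
have [lt_c lt_d] := fstep_lt_cd (fM_ge1 k) n_ge2 (weight_ge0 n (vcoord v))
  (weight_le n (vcoord v)) (vcoord v n) (vcoord v n.+1).
rewrite /f !fpolyS_vflip ?fpolyS -/n; try lia.
rewrite !ltrD2l !vcoord_vflip_eq ?vcoord_vflip_neq ?xc ?xd; try lia.
exact: conj lt_c lt_d.
Qed.

Lemma increasing_path_stays_in_subcube N (F : vertex N -> int) p q :
  (forall v : vertex N, vcoord v p -> vcoord v q ->
     F (vflip v p) < F v /\ F (vflip v q) < F v) ->
  forall s : seq (vertex N), increasing_path F s ->
  forall i j : nat, (i <= j < size s)%N ->
  vcoord (nth (vzero _) s i) p && vcoord (nth (vzero _) s i) q ->
  vcoord (nth (vzero _) s j) p && vcoord (nth (vzero _) s j) q.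
Proof.
move=> F_trap s /(sortedP (vzero N)) s_incr i j /andP[le_ij lt_js] in_i.
elim: j le_ij lt_js => [|j IHj] le_ij lt_js; first by case: i le_ij in_i.
case: (leqP i j) => [le_ij' | lt_ji]; last by have -> : j.+1 = i by lia.
have /andP[vp vq] := IHj le_ij' (ltnW lt_js).
have /andP[/existsP[t /eqP ->] lt_step] := s_incr j lt_js.
set v := nth (vzero N) s j in vp vq lt_step *.
have [lt_p lt_q] := F_trap v vp vq.
have [tp | ne_tp] := eqVneq (nat_of_ord t) p.
  by move: lt_step; rewrite tp => /(lt_trans lt_p); rewrite ltxx.
have [tq | ne_tq] := eqVneq (nat_of_ord t) q.
  by move: lt_step; rewrite tq => /(lt_trans lt_q); rewrite ltxx.
by rewrite !vcoord_vflip_neq 1?eq_sym ?vp ?vq.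
Qed.

Theorem mainTheorem8 (k : nat) :
  let n := (4 * k + 2)%N in
  ((forall v : vertex (4 * k.+1 + 2),
      vcoord v n -> vcoord v n.+1 ->
      f (vflip v n) < f v /\ f (vflip v n.+1) < f v)
   /\ (forall p : seq (vertex (4 * k.+1 + 2)), increasing_path (@f k.+1) p ->
      forall i j : nat, (i <= j < size p)%N ->
      vcoord (nth (vzero _) p i) n && vcoord (nth (vzero _) p i) n.+1 ->
      vcoord (nth (vzero _) p j) n && vcoord (nth (vzero _) p j) n.+1))
  /\
  ((forall v : vertex (4 * k.+1 + 2),
      vcoord v n.+2 -> vcoord v n.+3 ->
      f (vflip v n.+2) < f v /\ f (vflip v n.+3) < f v)
   /\ (forall p : seq (vertex (4 * k.+1 + 2)), increasing_path (@f k.+1) p ->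
      forall i j : nat, (i <= j < size p)%N ->
      vcoord (nth (vzero _) p i) n.+2 && vcoord (nth (vzero _) p i) n.+3 ->
      vcoord (nth (vzero _) p j) n.+2 && vcoord (nth (vzero _) p j) n.+3)).
Proof.
have trap_ab := increasing_path_stays_in_subcube (@f_lt_vflip_ab k).
have trap_cd := increasing_path_stays_in_subcube (@f_lt_vflip_cd k).
by split; split; [exact: f_lt_vflip_ab | exact: trap_ab | exact: f_lt_vflip_cd | exact: trap_cd].
Qed.
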